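(* Let $\mu$ be a non-homogeneous Gibbs capacity and $\eta\in(0,1)$. With probability 1, for every $x\in[0,1]^d$, $$\liminf_{j\to\infty}\frac{\log_2\widetilde{\mathsf M}_\mu(I_{x_{|j}})}{-j}\ \ge\ H_\ell(\eta_\ell).$$
   Context: Fix $d\ge1$; $\Sigma_j$ is the set of words of length $j$ over $\{0,1\}^d$, $\Sigma^*=\bigcup_{j\ge1}\Sigma_j$, $\Sigma=(\{0,1\}^d)^{\mathbb N_+}$ with standard ultrametric and shift $\sigma$, $[w]$ the cylinder of $w$, $|w|$ the length, $wv$ concatenation; for $w\in\Sigma_j$, $I_w=\prod_{i=1}^d[x_w^{(i)},x_w^{(i)}+2^{-j}]$, $x_w^{(i)}=\sum_{k=1}^jw_k^{(i)}2^{-k}$. For $w\in\Sigma_j$, $\mathcal N_j(w)$ is the set of $u\in\Sigma_j$ such that $I_u$ equals or is a neighbour (shares a boundary point) of $I_w$. A point $x\in[0,1]^d$ is coded by the binary expansions of its coordinates (lexicographically largest for dyadic coordinates), $x_{|j}$ denoting the prefix of length $j$. A Gibbs capacity is $\mu(I_w)=K\nu([w])^\alpha e^{-\beta|w|}$ with $K>0$, $(\alpha,\beta)\in[0,\infty)^2\setminus\{(0,0)\}$, $\nu$ a Gibbs measure on $\Sigma$ for a Hölder potential $\psi$: $C^{-1}e^{\Psi([w])-|w|P(\sigma,\psi)}\le\nu([w])\le Ce^{\Psi([w])-|w|P(\sigma,\psi)}$, $\Psi([w])=\sup_{t\in[w]}\sum_{i<|w|}\psi(\sigma^it)$, $P$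 the pressure. Non-homogeneous: $\alpha>0$ and $\psi$ not cohomologous to a constant. $\tau_\mu(q)=\lim_j-\frac1j\log_2\sum_{w\in\Sigma_j}\mu(I_w)^q$ and $D_\mu=\tau_\mu^*$ (Legendre transform $\inf_q(qH-\tau_\mu(q))$); $H_\ell(\eta_\ell)=\min\{H\ge0:D_\mu(H)\ge d(1-\eta)\}$. Sampling: $(p_w)$ independent Bernoulli with $\mathbb P(p_w=1)=2^{-d(1-\eta)|w|}$; $\mathsf M_\mu(I_w)=\max\{\mu(I_{wv}):v\in\Sigma^*,p_{wv}=1\}$ and $\widetilde{\mathsf M}_\mu(I_w)=\max_{u\in\mathcal N_{|w|}(w)}\mathsf M_\mu(I_u)$. *)

From HB Require Import structures.
From mathcomp Require Import all_boot all_order all_algebra.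
From mathcomp Require Import all_classical all_reals all_analysis.
Set Implicit Arguments. Unset Strict Implicit. Unset Printing Implicit Defensive.
Import Order.TTheory GRing.Theory Num.Theory.
Import numFieldNormedType.Exports.
Local Open Scope classical_set_scope.
Local Open Scope ring_scope.

Definition letter (d : nat) := {ffun 'I_d -> bool}.
HB.instance Definition _ (d : nat) := Finite.on (letter d).
HB.instance Definition _ (d : nat) := isPointed.Build (letter d) [ffun _ => false].
(* Finite words: sequences of letters; Sigma^* = words of length >= 1. *)
Definition word (d : nat) := seq (letter d).
(* Sigma = ({0,1}^d)^{N_+}; position k >= 1 of the paper is index k-1 here. *)
Definition seqspace (d : nat) := nat -> letter d.


Definition shift d (t : seqspace d) : seqspace d := fun n => t n.+1.
Definition cyl d (w : word d) : set (seqspace d) :=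
  [set t | forall k, (k < size w)%N -> t k = nth [ffun _ => false] w k].
Definition cylinders d : set (set (seqspace d)) := [set cyl w | w in [set: word d]].
(* Sigma as a measurable space: the sigma-algebra generated by cylinders
   (= the Borel sigma-algebra of the ultrametric product topology). *)
Definition Sigma (d : nat) : measurableType _ := g_sigma_algebraType (@cylinders d).

(* s and t agree on their first n letters, i.e. dist(s,t) <= 2^{-n} for the
   standard ultrametric dist(s,t) = 2^{-(length of common xprefix)}. *)
Definition agree d (n : nat) (s t : seqspace d) := forall k, (k < n)%N -> s k = t k.

Section Potentials.
Variables (R : realType) (d : nat).

Definition holder (psi : seqspace d -> R) :=
  exists C gam : R, 0 < C /\ 0 < gam /\
    forall n s t, agree n s t -> `|psi s - psi t| <= C * (2 `^ (- (gam * n%:R))).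

Definition ucontinuous (u : seqspace d -> R) :=
  forall t (e : R), 0 < e -> exists n, forall s, agree n s t -> `|u s - u t| < e.

Definition cohomologous_to_const (psi : seqspace d -> R) :=
  exists (u : seqspace d -> R) (c : R), ucontinuous u /\
    forall t, psi t = u (shift t) - u t + c.

Definition birkhoff (psi : seqspace d -> R) (n : nat) (t : seqspace d) : R :=
  \sum_(i < n) psi (iter i (@shift d) t).

Definition Psi (psi : seqspace d -> R) (w : word d) : R :=
  sup [set birkhoff psi (size w) t | t in cyl w].

Definition pressure (psi : seqspace d -> R) : R :=
  limn (fun n : nat => n%:R^-1 *
    ln (\sum_(w : n.-tuple (letter d)) expR (Psi psi (tval w)))).

Definition gibbs (psi : seqspace d -> R) (nu : probability (Sigma d) R) :=
  exists C : R, 0 < C /\ forall w : word d, (0 < size w)%N ->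
    C^-1 * expR (Psi psi w - (size w)%:R * pressure psi) <= fine (nu (cyl w)) /\
    fine (nu (cyl w)) <= C * expR (Psi psi w - (size w)%:R * pressure psi).

(* mu(I_w) = K nu([w])^alpha e^{-beta |w|} *)
Definition gibbs_cap (K alpha beta : R) (nu : probability (Sigma d) R)
    (w : word d) : R :=
  K * (fine (nu (cyl w))) `^ alpha * expR (- (beta * (size w)%:R)).

Definition log2 (x : R) : R := ln x / ln 2.

Definition tau_mu (mu : word d -> R) (q : R) : R :=
  limn (fun j : nat => - (j%:R^-1 *
    log2 (\sum_(w : j.-tuple (letter d)) (mu (tval w)) `^ q))).

Definition D_mu (mu : word d -> R) (H : R) : \bar R :=
  ereal_inf [set ((q * H - tau_mu mu q)%:E) | q in [set: R]].

Definition H_ell (mu : word d -> R) (eta : R) : R :=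
  inf [set H : R | 0 <= H /\ ((d%:R * (1 - eta))%:E <= D_mu mu H)%E].

Definition cpoint := 'I_d -> R.
Definition corner (w : word d) (i : 'I_d) : R :=
  \sum_(k < size w) (nth [ffun _ => false] w k i)%:R * 2 `^ (- (k.+1)%:R).
Definition cube (w : word d) : set cpoint :=
  [set y | forall i, corner w i <= y i <= corner w i + 2 `^ (- (size w)%:R)].
Definition neighbours (w : word d) : set (word d) :=
  [set u | size u = size w /\ exists y, cube u y /\ cube w y].

(* binary digit k >= 1 of t in [0,1], lexicographically largest expansion *)
Definition bdigit (t : R) (k : nat) : bool :=
  if t == 1 then true else odd `|Num.floor (2 ^+ k * t)|%N.
Definition xprefix (x : cpoint) (j : nat) : word d :=
  mkseq (fun k => [ffun i => bdigit (x i) k.+1]) j.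

(* M_mu(I_w) = max { mu(I_{wv}) : v in Sigma^*, p_{wv} = 1 } (-oo if empty) *)
Definition Msamp (mu : word d -> R) (p : word d -> bool) (w : word d) : \bar R :=
  ereal_sup [set (mu (w ++ v))%:E | v in [set v : word d | (0 < size v)%N /\ p (w ++ v)]].
Definition Mtilde (mu : word d -> R) (p : word d -> bool) (w : word d) : \bar R :=
  ereal_sup [set Msamp mu p u | u in neighbours w].

(* log2 (M) / (-j) in the extended reals, with log2 0 = log2 (-oo) = -oo *)
Definition log_ratio (M : \bar R) (j : nat) : \bar R :=
  match M with
  | r%:E => if 0 < r then ((log2 r) / (- j%:R))%:E else +oo%E
  | +oo%E => -oo%E
  | -oo%E => +oo%E
  end.

End Potentials.

Definition mutually_independent_on {dO : measure_display} {Omega : measurableType dO}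
  {R : realType} (P : probability Omega R) {I : eqType} (D : pred I)
  (A : I -> set Omega) :=
  forall s : seq I, uniq s -> all D s ->
    P (\bigcap_(i in [set i | i \in s]) A i) = (\prod_(i <- s) P (A i))%E.

(* Fix 0 <= h < H_ell; by definition of H_ell there is q > 0 with
   q h - tau(q) < d (1 - eta).  Bounded distortion of the Hoelder potential makes
   the Gibbs capacity quasi-multiplicative, so the partition sums
   Z_n = sum_{|w| = n} mu(I_w)^q are super-multiplicative up to a constant; by
   Fekete's lemma tau(q) exists and Z_n <= C 2^{-n tau(q)}.  By Markov's
   inequality at most Z_n 2^{n h q} words of generation n satisfy
   mu(I_w) > 2^{-n h}, and each is sampled with probability 2^{-n d (1 - eta)}, so
   the probability that a heavy word of generation n is sampled decays
   geometrically.  By Borel-Cantelli, almost surely every sampled word of large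
   generation n has mu(I_w) <= 2^{-n h}, which bounds tilde M_mu(I_w) by
   2^{-|w| h}.  Letting h increase to H_ell along a sequence gives the liminf
   bound. *)

From Pilot Require Import Defs.
From HB Require Import structures.
From mathcomp Require Import all_boot all_order all_algebra.
From mathcomp Require Import all_classical all_reals all_analysis.
From mathcomp Require Import ring lra zify.
Set Implicit Arguments. Unset Strict Implicit. Unset Printing Implicit Defensive.
Import Order.TTheory GRing.Theory Num.Theory.
Import numFieldNormedType.Exports.
Local Open Scope classical_set_scope.
Local Open Scope ring_scope.

Section Fekete.
Variables (R : realType) (a : nat -> R).
Hypothesis a_super : forall m n, (0 < m)%N -> (0 < n)%N -> a m + a n <= a (m + n).

Lemma superadditive_mulnD m q r : (0 < m)%N -> (0 < r)%N ->
  q%:R * a m + a r <= a (q * m + r).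
Proof.
move=> m0; elim: q r => [|q IH] r r0; first by rewrite mul0r add0r.
rewrite mulSn -addnA (le_trans _ (a_super m0 _)) ?addn_gt0 ?r0 ?orbT//.
by have := IH r r0; rewrite -(addn1 q) natrD mulrDl mul1r; lra.
Qed.

Lemma superadditive_linear_lower m : (0 < m)%N ->
  exists c, forall n, (0 < n)%N -> n%:R * (a m / m%:R) - c <= a n.
Proof.
move=> m0; set x := a m / m%:R; set T := \sum_(r < m.+1) `|a r|.
exists (m%:R * `|x| + T) => n n0.
set q := (n.-1 %/ m)%N; set r := (n.-1 %% m).+1.
have nqr : n = (q * m + r)%N by rewrite /r addnS -divn_eq; lia.
have rm : (r < m.+1)%N by rewrite ltnS ltn_mod.
have hqm1 : n%:R - m%:R <= (q * m)%:R :> R.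
  by rewrite lerBlDr -natrD ler_nat nqr leq_add2l -ltnS.
have hqm2 : (q * m)%:R <= n%:R :> R by rewrite ler_nat nqr leq_addr.
have hx : n%:R * x - m%:R * `|x| <= (q * m)%:R * x.
  suff : (n%:R - (q * m)%:R) * x <= m%:R * `|x| by lra.
  apply: (le_trans (ler_norm _)); rewrite normrM ler_wpM2r//.
  by rewrite ger0_norm; lra.
have har : - T <= a r.
  rewrite lerNl (le_trans (ler_norm _))// normrN.
  by rewrite /T (bigD1 (Ordinal rm))//= lerDl sumr_ge0.
have hqa : q%:R * a m = (q * m)%:R * x.
  by rewrite /x natrM -mulrA [_ * (_ / _)]mulrC divfK// pnatr_eq0 -lt0n.
have := superadditive_mulnD q m0 (ltn0Sn (n.-1 %% m)); rewrite -/r -nqr hqa; lra.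
Qed.

Hypothesis a_ub : exists B, forall n, (0 < n)%N -> a n <= n%:R * B.

Definition growth_rate := sup [set a n / n%:R | n in [set n | (0 < n)%N]].

Lemma has_sup_growth : has_sup [set a n / n%:R | n in [set n | (0 < n)%N]].
Proof.
have [B ub] := a_ub; split; first by exists (a 1%N / 1); exists 1%N.
by exists B => _ [n n0 <-]; rewrite ler_pdivrMr ?ltr0n// mulrC ub.
Qed.

Lemma le_growth_rate n : (0 < n)%N -> a n <= n%:R * growth_rate.
Proof.
move=> n0; rewrite -ler_pdivrMl ?ltr0n// mulrC.
by apply: sup_upper_bound; [exact: has_sup_growth | exists n].
Qed.

Lemma fekete : (fun n => a n / n%:R) @ \oo --> growth_rate.
Proof.
apply/cvgrPdist_le => e e0.
have [_ [m m0 <-] hm] := sup_adherent (divr_gt0 e0 (ltr0n _ 2)) has_sup_growth.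
have [c hc] := superadditive_linear_lower m0.
near=> n.
have n0 : (0 < n)%N by near: n; exact: nbhs_infty_gt.
have nR0 : 0 < n%:R :> R by rewrite ltr0n.
have cn : c <= n%:R * (e / 2).
  near: n; have /cvgryPge/(_ (c / (e / 2))) := @cvgr_idn R.
  by apply: filterS => n; rewrite -ler_pdivrMr ?divr_gt0.
have lo : a m / m%:R - e / 2 <= a n / n%:R.
  by rewrite ler_pdivlMr//; have := hc n n0; lra.
have hi : a n / n%:R <= growth_rate by rewrite ler_pdivrMr// mulrC le_growth_rate.
by move: hm; rewrite -/growth_rate ler_norml => hm; apply/andP; split; lra.
Unshelve. all: by end_near. Qed.

End Fekete.

Lemma sum_exprB_le (R : realType) (r : R) m : 0 < r < 1 ->
  \sum_(i < m) r ^+ (m - i) <= r / (1 - r).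
Proof.
case/andP => r0 r1; rewrite (reindex_inj rev_ord_inj) /=.
under eq_bigr => i _ do rewrite subKn// exprS.
have r1' : `|r| < 1 by rewrite ger0_norm// ltW.
by have := geometric_le_lim m (ltW r0) r0 r1'; rewrite /series /= big_mkord.
Qed.

Lemma pow2E (R : realType) (x : R) : 2 `^ x = expR (x * ln 2).
Proof. by rewrite /powR pnatr_eq0. Qed.

Lemma pow2_lt1 (R : realType) (x : R) : x < 0 -> 2 `^ x < 1.
Proof. by move=> x0; rewrite pow2E expR_lt1 pmulr_llt0// ln_gt0// ltr1n. Qed.

Lemma pow2_mulrn (R : realType) (g : R) n : 2 `^ (- (g * n%:R)) = (2 `^ (- g)) ^+ n.
Proof. by rewrite -mulNr powRrM powR_mulrn// powR_ge0. Qed.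

Section Birkhoff.
Variables (R : realType) (d : nat) (psi : seqspace d -> R).
Implicit Types (u v w : word d) (s t : seqspace d).

Lemma iter_shift i s k : iter i (@Defs.shift d) s k = s (i + k)%N.
Proof. by elim: i k => [|i IH] k //=; rewrite /Defs.shift IH addSnnS. Qed.

Lemma birkhoffD m n t :
  birkhoff psi (m + n) t = birkhoff psi m t + birkhoff psi n (iter m (@Defs.shift d) t).
Proof.
rewrite /birkhoff big_split_ord /=; congr (_ + _).
by apply: eq_bigr => i _; rewrite /= addnC iterD.
Qed.

Definition seq_of_word w : seqspace d := fun k => nth [ffun _ => false] w k.

Lemma cyl_seq_of_word w : cyl w (seq_of_word w).
Proof. by []. Qed.

Lemma cyl_catl u v t : cyl (u ++ v) t -> cyl u t.
Proof.
move=> h k ku; rewrite h ?nth_cat ?ku// size_cat.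
exact: leq_trans ku (leq_addr _ _).
Qed.

Lemma cyl_catr u v t : cyl (u ++ v) t -> cyl v (iter (size u) (@Defs.shift d) t).
Proof.
move=> h k kv; rewrite iter_shift h ?size_cat ?ltn_add2l// nth_cat.
by rewrite ltnNge leq_addr /= addKn.
Qed.

Hypothesis psi_holder : holder psi.

Lemma birkhoff_distortion : exists D, forall w s t, cyl w s -> cyl w t ->
  birkhoff psi (size w) s <= birkhoff psi (size w) t + D.
Proof.
have [C [g [C0 [g0 hC]]]] := psi_holder; set r := 2 `^ (- g).
have r01 : 0 < r < 1.
  by rewrite powR_gt0// pow2_lt1// oppr_lt0.
exists (C * (r / (1 - r))) => w s t hs ht; set m := size w.
suff : \sum_(i < m) (psi (iter i (@Defs.shift d) s) - psi (iter i (@Defs.shift d) t))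
    <= C * (r / (1 - r)).
  by rewrite sumrB /birkhoff; lra.
apply: le_trans (ler_wpM2l (ltW C0) (sum_exprB_le m r01)).
rewrite mulr_sumr; apply: ler_sum => i _; apply: le_trans (ler_norm _) _.
rewrite -pow2_mulrn; apply: hC => k km.
by rewrite !iter_shift hs ?ht// -ltn_subRL.
Qed.

Lemma has_sup_birkhoff w : has_sup [set birkhoff psi (size w) t | t in cyl w].
Proof.
have [D hD] := birkhoff_distortion.
split; first by exists (birkhoff psi (size w) (seq_of_word w)), (seq_of_word w).
exists (birkhoff psi (size w) (seq_of_word w) + D) => _ [t ht <-].
exact: hD.
Qed.

Lemma birkhoff_le_Psi w t : cyl w t -> birkhoff psi (size w) t <= Psi psi w.
Proof. by move=> ht; apply: sup_upper_bound; [exact: has_sup_birkhoff | exists t]. Qed.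

Lemma Psi_le_birkhoff : exists D, forall w t, cyl w t -> Psi psi w <= birkhoff psi (size w) t + D.
Proof.
have [D hD] := birkhoff_distortion; exists D => w t ht.
by apply: ge_sup; [exists (birkhoff psi (size w) t), t | move=> _ [s hs <-]; exact: hD].
Qed.

Lemma Psi_cat : exists D, forall u v, Psi psi u + Psi psi v <= Psi psi (u ++ v) + D.
Proof.
have [D hD] := Psi_le_birkhoff; exists (D + D) => u v.
have huv := @cyl_seq_of_word (u ++ v).
have := birkhoff_le_Psi huv; rewrite size_cat birkhoffD.
have := hD u _ (cyl_catl huv); have := hD v _ (cyl_catr huv); lra.
Qed.

End Birkhoff.

Section GibbsCapacity.
Variables (R : realType) (d : nat) (psi : seqspace d -> R) (nu : probability (Sigma d) R).
Implicit Types (u v w : word d).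

Lemma measurable_cyl w : measurable (cyl w : set (Sigma d)).
Proof. by apply: sub_sigma_algebra; exists w. Qed.

Lemma fine_nu_cyl_ge0 w : 0 <= fine (nu (cyl w)).
Proof. exact/fine_ge0/measure_ge0. Qed.

Lemma fine_nu_cyl_le1 w : fine (nu (cyl w)) <= 1.
Proof.
have := probability_le1 nu (measurable_cyl w).
by rewrite -lee_fin fineK// (fin_num_measure nu _ (measurable_cyl w)).
Qed.

Hypothesis nu_gibbs : gibbs psi nu.

Lemma fine_nu_cyl_gt0 w : (0 < size w)%N -> 0 < fine (nu (cyl w)).
Proof.
have [C [C0 hC]] := nu_gibbs; move=> /hC[+ _]; apply: lt_le_trans.
by rewrite mulr_gt0 ?invr_gt0 ?expR_gt0.
Qed.

Hypothesis psi_holder : holder psi.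

Lemma gibbs_quasi_mult : exists2 c, 0 < c & forall u v,
  (0 < size u)%N -> (0 < size v)%N ->
  c * fine (nu (cyl u)) * fine (nu (cyl v)) <= fine (nu (cyl (u ++ v))).
Proof.
have [C [C0 hC]] := nu_gibbs; have [D hD] := Psi_cat psi_holder.
exists (C ^- 3 * expR (- D)) => [|u v u0 v0].
  by rewrite mulr_gt0 ?invr_gt0 ?exprn_gt0 ?expR_gt0.
have uv0 : (0 < size (u ++ v))%N by rewrite size_cat addn_gt0 u0.
have [_ hu] := hC u u0; have [_ hv] := hC v v0; have [huv _] := hC _ uv0.
set Pr := pressure psi in hu hv huv.
set Gu := expR (Psi psi u - _) in hu; set Gv := expR (Psi psi v - _) in hv.
have hG : expR (- D) * (Gu * Gv) <= expR (Psi psi (u ++ v) - (size (u ++ v))%:R * Pr).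
  by rewrite /Gu /Gv -!expRD ler_expR size_cat natrD; have := hD u v; lra.
have hab : fine (nu (cyl u)) * fine (nu (cyl v)) <= (C * Gu) * (C * Gv).
  by rewrite ler_pM ?fine_nu_cyl_ge0.
apply: le_trans huv; rewrite -mulrA.
apply: le_trans (ler_wpM2l _ hab) _; first by rewrite mulr_ge0 ?expR_ge0 ?invr_ge0 ?exprn_ge0 ?ltW.
have -> : C ^- 3 * expR (- D) * (C * Gu * (C * Gv)) = C^-1 * (expR (- D) * (Gu * Gv)).
  by field; rewrite gt_eqF.
by apply: ler_wpM2l => //; rewrite invr_ge0 ltW.
Qed.

Variables (K alpha beta : R).
Hypotheses (K_gt0 : 0 < K) (alpha_gt0 : 0 < alpha) (beta_ge0 : 0 <= beta).
Let mu := gibbs_cap K alpha beta nu.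

Lemma gibbs_cap_gt0 w : (0 < size w)%N -> 0 < mu w.
Proof. by move=> w0; rewrite !mulr_gt0 ?powR_gt0 ?expR_gt0 ?fine_nu_cyl_gt0. Qed.

Lemma gibbs_cap_le w : mu w <= K.
Proof.
rewrite /mu /gibbs_cap -[leRHS]mulr1 -mulrA; apply: ler_wpM2l; first exact: ltW.
apply: mulr_ile1.
- exact: powR_ge0.
- exact: expR_ge0.
- have := ge0_ler_powR (ltW alpha_gt0) (fine_nu_cyl_ge0 w) ler01 (fine_nu_cyl_le1 w).
  by rewrite powR1.
- by rewrite expR_le1 oppr_le0 mulr_ge0.
Qed.

Lemma gibbs_cap_quasi_mult : exists2 c, 0 < c & forall u v,
  (0 < size u)%N -> (0 < size v)%N -> c * mu u * mu v <= mu (u ++ v).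
Proof.
have [c c0 hc] := gibbs_quasi_mult.
exists (c `^ alpha / K) => [|u v u0 v0]; first by rewrite divr_gt0 ?powR_gt0.
have hpow : c `^ alpha * fine (nu (cyl u)) `^ alpha * fine (nu (cyl v)) `^ alpha
    <= fine (nu (cyl (u ++ v))) `^ alpha.
  rewrite -!powRM ?mulr_ge0 ?fine_nu_cyl_ge0 ?(ltW c0)//.
  by apply: ge0_ler_powR (hc u v u0 v0);
    rewrite ?nnegrE ?mulr_ge0 ?fine_nu_cyl_ge0 ?(ltW c0) ?(ltW alpha_gt0).
rewrite /mu /gibbs_cap size_cat natrD mulrDr opprD expRD.
set A := fine _ `^ alpha in hpow *; set B := fine _ `^ alpha in hpow *.
set eu := expR _; set ev := expR _.
have -> : c `^ alpha / K * (K * A * eu) * (K * B * ev) = K * (c `^ alpha * A * B) * (eu * ev).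
  by field; rewrite gt_eqF.
apply: ler_wpM2r; first by rewrite mulr_ge0 ?expR_ge0.
by apply: ler_wpM2l; first exact: ltW.
Qed.

End GibbsCapacity.

Lemma sum_tuple_cat (R : nmodType) (T : finType) m n (F : seq T -> R) :
  \sum_(w : (m + n).-tuple T) F w = \sum_(u : m.-tuple T) \sum_(v : n.-tuple T) F (u ++ v).
Proof.
rewrite pair_bigA /= (reindex (fun p : m.-tuple T * n.-tuple T => cat_tuple p.1 p.2)) //=.
exists (fun w => ([tuple tnth w (lshift n i) | i < m], [tuple tnth w (rshift m i) | i < n])).
- move=> [u v] _ /=; congr pair; apply: eq_from_tnth => i.
    by rewrite tnth_mktuple tnth_lshift.
  by rewrite tnth_mktuple tnth_rshift.
- move=> w _; apply: eq_from_tnth => i; rewrite -(fintype.splitK i).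
  by case: (fintype.split i) => j /=; rewrite ?tnth_lshift ?tnth_rshift tnth_mktuple.
Qed.

Lemma cvg_invrn (R : realType) : (fun n : nat => (n%:R : R)^-1) @ \oo --> 0.
Proof.
apply/cvgrVy; first by near=> n; rewrite invr_gt0 ltr0n; near: n; exact: nbhs_infty_gt.
by apply: cvg_trans (@cvgr_idn R); apply: near_eq_cvg; near=> n; rewrite /= invrK.
Unshelve. all: by end_near. Qed.

Section PartitionFunction.
Variables (R : realType) (T : finType) (t0 : T) (mu : seq T -> R) (q c K : R).
Hypotheses (q_gt0 : 0 < q) (c_gt0 : 0 < c).
Hypothesis mu_gt0 : forall w, (0 < size w)%N -> 0 < mu w.
Hypothesis mu_le : forall w, mu w <= K.
Hypothesis mu_quasi_mult : forall u v, (0 < size u)%N -> (0 < size v)%N ->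
  c * mu u * mu v <= mu (u ++ v).

Definition partition n := \sum_(w : n.-tuple T) mu w `^ q.

Lemma partition_gt0 n : (0 < n)%N -> 0 < partition n.
Proof.
move=> n0; rewrite /partition (bigD1 [tuple of nseq n t0])//=.
by rewrite ltr_pwDl ?sumr_ge0// => *; rewrite ?powR_ge0 ?powR_gt0 ?mu_gt0 ?size_nseq.
Qed.

Lemma partition_le n : (0 < n)%N -> partition n <= (#|T| ^ n)%:R * K `^ q.
Proof.
move=> n0; have -> : (#|T| ^ n)%:R * K `^ q = \sum_(w : n.-tuple T) K `^ q.
  by rewrite sumr_const card_tuple mulr_natl.
apply: ler_sum => w _.
have mu0 : 0 < mu w by rewrite mu_gt0 ?size_tuple.
by apply: ge0_ler_powR; rewrite ?nnegrE ?(ltW q_gt0) ?(ltW mu0) ?(le_trans (ltW mu0)).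
Qed.

Lemma partition_super_mult m n : (0 < m)%N -> (0 < n)%N ->
  c `^ q * partition m * partition n <= partition (m + n).
Proof.
move=> m0 n0; rewrite /partition (sum_tuple_cat _ _ (fun w => mu w `^ q)).
rewrite -mulrA mulr_suml mulr_sumr.
apply: ler_sum => u _; rewrite !mulr_sumr; apply: ler_sum => v _.
have hu : (0 < size u)%N by rewrite size_tuple.
have hv : (0 < size v)%N by rewrite size_tuple.
have [mu0 mv0] := (ltW (mu_gt0 hu), ltW (mu_gt0 hv)).
have ge0 : 0 <= c * mu u * mu v by rewrite !mulr_ge0 ?(ltW c_gt0).
rewrite mulrA -!powRM ?mulr_ge0 ?(ltW c_gt0)//.
apply: ge0_ler_powR (mu_quasi_mult hu hv) => //; first exact: ltW.
by rewrite nnegrE (le_trans ge0 (mu_quasi_mult hu hv)).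
Qed.

Let a n := ln (c `^ q * partition n).

Let a_super m n : (0 < m)%N -> (0 < n)%N -> a m + a n <= a (m + n).
Proof.
move=> m0 n0; have cq0 : 0 < c `^ q by rewrite powR_gt0.
rewrite /a -lnM ?posrE ?mulr_gt0 ?partition_gt0//.
rewrite ler_ln ?posrE ?mulr_gt0 ?partition_gt0 ?addn_gt0 ?m0//.
by rewrite mulrCA ler_pM2l// partition_super_mult.
Qed.

Let a_linear : exists B, forall n, (0 < n)%N -> a n <= n%:R * B.
Proof.
have T0 : (0 < #|T|)%N by apply/card_gt0P; exists t0.
have K0 : 0 < K by apply: lt_le_trans (mu_le [:: t0]); exact: mu_gt0.
set k := c `^ q * K `^ q; have k0 : 0 < k by rewrite mulr_gt0 ?powR_gt0.
exists (`|ln k| + ln #|T|%:R) => n n0; rewrite /a.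
have hp : 0 < (#|T| ^ n)%:R :> R by rewrite ltr0n expn_gt0 T0.
apply: (@le_trans _ _ (ln (k * (#|T| ^ n)%:R))).
  rewrite ler_ln ?posrE ?mulr_gt0 ?powR_gt0 ?partition_gt0//.
  by rewrite /k -mulrA ler_pM2l ?powR_gt0// mulrC partition_le.
rewrite lnM ?posrE// natrX lnXn ?ltr0n// -mulr_natl.
have := ler_norm (ln k); have : 1 <= n%:R :> R by rewrite ler1n.
by have := normr_ge0 (ln k); nra.
Qed.

Lemma partition_exponent : exists2 tau : R,
  (fun j => - (j%:R^-1 * log2 (partition j))) @ \oo --> tau &
  exists2 C0 : R, 0 < C0 & forall n, (0 < n)%N -> partition n <= C0 * 2 `^ (- (n%:R * tau)).
Proof.
set L := growth_rate a; have ln2 : 0 < ln (2 : R) by rewrite ln_gt0 ?ltr1n.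
have cq0 : 0 < c `^ q by rewrite powR_gt0.
exists (- L / ln 2).
  have -> : (fun j => - (j%:R^-1 * log2 (partition j))) =
      (fun j => (- (a j / j%:R) + ln (c `^ q) / j%:R) / ln 2).
    apply/funext => -[|j]; first by rewrite invr0 !mul0r !mulr0 oppr0 addr0 mul0r.
    rewrite /a lnM ?posrE ?partition_gt0// /log2; field.
    by rewrite gt_eqF//= addrC natr1 pnatr_eq0.
  have -> : - L / ln 2 = (- L + ln (c `^ q) * 0) / ln 2 by rewrite mulr0 addr0.
  apply: cvgMr_tmp; apply: cvgD.
    by apply: cvgN; exact: fekete a_super a_linear.
  by apply: cvgMl_tmp; exact: cvg_invrn.
exists (c `^ q)^-1 => [|n n0]; first by rewrite invr_gt0.
have -> : 2 `^ (- (n%:R * (- L / ln 2))) = expR (n%:R * L).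
  by rewrite pow2E; congr expR; field; rewrite gt_eqF.
rewrite ler_pdivlMl// -[c `^ q * _]lnK ?posrE ?mulr_gt0 ?partition_gt0// ler_expR.
exact: le_growth_rate.
Qed.

End PartitionFunction.

Lemma lt_H_ell_moment (R : realType) d (mu : word d -> R) (eta h : R) :
  0 <= h -> h < H_ell mu eta ->
  exists2 q, 0 < q & q * h - tau_mu mu q < d%:R * (1 - eta).
Proof.
move=> h0; rewrite /H_ell; set S := [set H | _ /\ _] => hS.
have [[H1 SH1]|S0] := pselect (S !=set0); last first.
  have S_0 : S = set0 by apply/seteqP; split => x // Sx; apply: S0; exists x.
  by move: hS; rewrite S_0 inf0; lra.
have lbS : has_lbound S by exists 0 => x [].
have hH1 := ge_inf lbS SH1.
have : (D_mu mu h < (d%:R * (1 - eta))%:E)%E.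
  by rewrite ltNge; apply/negP => Dh; have := ge_inf lbS (conj h0 Dh); lra.
move=> /ereal_inf_lt[_ [q _ <-]]; rewrite lte_fin => hq; exists q => //.
rewrite ltNge; apply/negP => q0.
have : (D_mu mu H1 <= (q * H1 - tau_mu mu q)%:E)%E by apply: ereal_inf_lbound; exists q.
move/(le_trans SH1.2); rewrite lee_fin.
have : q * H1 <= q * h by rewrite ler_wnM2l//; lra.
lra.
Qed.

Lemma nneseries_geometric_lt (R : realType) (u : nat -> \bar R) (C0 r : R) :
  0 <= C0 -> 0 < r < 1 -> (forall n, 0 <= u n)%E ->
  (forall n, u n <= (C0 * r ^+ n)%:E)%E -> (\sum_(n <oo) u n < +oo)%E.
Proof.
move=> C00 /andP[r0 r1] u0 hu; apply: (@le_lt_trans _ _ (C0 / (1 - r))%:E); last exact: ltry.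
apply: lime_le; first exact: is_cvg_nneseries.
apply: nearW => n; apply: (@le_trans _ _ (\sum_(0 <= k < n) (C0 * r ^+ k)%:E)%E).
  by apply: lee_sum => k _; exact: hu.
rewrite sumEFin lee_fin.
by apply: geometric_le_lim; rewrite // ger0_norm// ltW.
Qed.

Section Probability.
Variables (dO : measure_display) (Omega : measurableType dO) (R : realType).
Variable P : probability Omega R.

Lemma ae_full_measure (Q : Omega -> Prop) : (\forall om \ae P, Q om) ->
  exists E, [/\ measurable E, P E = 1%E & forall om, E om -> Q om].
Proof.
move=> [A [mA PA0 sA]]; exists (~` A); split; first exact: measurableC.
  by rewrite probability_setC// PA0 sube0.
by move=> om Aom; apply: contra_notP Aom => Qom; exact: sA.
Qed.

Lemma borel_cantelli_ae (A : nat -> set Omega) : (forall J, measurable (A J)) ->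
  (\sum_(J <oo) P (A J) < +oo)%E ->
  \forall om \ae P, exists k, forall J, (k <= J)%N -> ~ A J om.
Proof.
move=> mA sA; exists (lim_sup_set A); split; last 1 first.
- move=> om /= nev k _; apply: contrapT => nAk; apply: nev.
  by exists k => J kJ AJ; apply: nAk; exists J.
- by apply: bigcapT_measurable => k; exact: bigcup_measurable.
- exact: lim_sup_set_cvg0.
Qed.

Lemma measure_big_setU_le (I : Type) (s : seq I) (Q : pred I) (F : I -> set Omega) :
  (forall i, measurable (F i)) ->
  (P (\big[setU/set0]_(i <- s | Q i) F i) <= \sum_(i <- s | Q i) P (F i))%E.
Proof.
move=> mF; elim: s => [|i s IH]; first by rewrite !big_nil measure0.
rewrite !big_cons; case: (Q i) => //.
apply: le_trans (measureU2 P (mF i) (bigsetU_measurable _ _)) _ => [j _|]; first exact: mF.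
exact: leeD2l.
Qed.

End Probability.

Lemma sum_gt_le_moment (R : realType) (I : finType) (f : I -> R) (x q t : R) :
  0 < x -> 0 < q -> 0 <= t -> (forall i, 0 <= f i) ->
  \sum_(i | x < f i) t <= (\sum_i f i `^ q) / x `^ q * t.
Proof.
move=> x0 q0 t0 f0; rewrite big_mkcond mulr_suml mulr_suml; apply: ler_sum => i _.
case: ifPn => [xf|_]; last by rewrite !mulr_ge0 ?invr_ge0 ?powR_ge0.
rewrite ler_peMl// ler_pdivlMr ?powR_gt0// mul1r.
by apply: ge0_ler_powR; rewrite ?nnegrE ?(ltW q0) ?(ltW x0) ?f0 ?(ltW xf).
Qed.

Section Sampling.
Variables (R : realType) (d : nat) (dO : measure_display) (Omega : measurableType dO).
Variables (P : probability Omega R) (p : word d -> Omega -> bool) (dd : R).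
Hypothesis p_meas : forall w, measurable [set om | p w om].
Hypothesis p_prob : forall w : word d, (0 < size w)%N ->
  P [set om | p w om] = (2 `^ (- (dd * (size w)%:R)))%:E.
Variables (mu : word d -> R) (h q C0 tau : R).
Hypotheses (q_gt0 : 0 < q) (C0_gt0 : 0 < C0).
Hypothesis mu_gt0 : forall w, (0 < size w)%N -> 0 < mu w.
Hypothesis partition_le : forall n, (0 < n)%N ->
  partition mu q n <= C0 * 2 `^ (- (n%:R * tau)).
Hypothesis exponent_lt : q * h - tau < dd.

Let heavy J := \big[setU/set0]_(w : J.+1.-tuple (letter d) | 2 `^ (- (J.+1%:R * h)) < mu w)
  [set om | p w om].

Let rho := 2 `^ (q * h - tau - dd).

Let rho01 : 0 < rho < 1.
Proof. by rewrite /rho powR_gt0//= pow2_lt1// subr_lt0. Qed.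

Let P_heavy J : (P (heavy J) <= (C0 * rho ^+ J.+1)%:E)%E.
Proof.
apply: le_trans (measure_big_setU_le P _ _ (fun w : J.+1.-tuple _ => p_meas w)) _.
rewrite (eq_bigr (fun _ => (2 `^ (- (dd * J.+1%:R)))%:E)) => [|w _];
  last by rewrite p_prob ?size_tuple.
have mu0 (w : J.+1.-tuple (letter d)) : 0 <= mu w by rewrite ltW// mu_gt0// size_tuple.
rewrite sumEFin lee_fin.
apply: le_trans (sum_gt_le_moment (powR_gt0 _ _) q_gt0 (powR_ge0 _ _) mu0) _ => //.
apply: le_trans (ler_wpM2r (powR_ge0 _ _) (ler_wpM2r _ (partition_le (ltn0Sn J)))) _.
  by rewrite invr_ge0 powR_ge0.
rewrite -powRrM /rho -powR_mulrn ?powR_ge0// -powRrM !pow2E -expRN -!mulrA -!expRD.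
by rewrite le_eqVlt; apply/orP; left; apply/eqP; congr (_ * expR _); ring.
Qed.

Lemma ae_eventually_sampled_le : \forall om \ae P,
  \forall j \near \oo, forall w : word d, size w = j -> p w om ->
    mu w <= 2 `^ (- (j%:R * h)).
Proof.
have mheavy J : measurable (heavy J) by exact: bigsetU_measurable.
have hsum : (\sum_(J <oo) P (heavy J) < +oo)%E.
  apply: (nneseries_geometric_lt (C0 := C0 * rho) (r := rho)) => // [|J].
    by apply: mulr_ge0; apply: ltW; [exact: C0_gt0 | case/andP: rho01].
  by have := P_heavy J; rewrite exprS mulrA.
apply: filterS (borel_cantelli_ae mheavy hsum) => om [k hk].
exists k.+1 => // j /= kj w wj pw; rewrite leNgt; apply/negP => hw.
have [J jJ] : exists J, j = J.+1 by exists j.-1; rewrite prednK// (leq_trans _ kj).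
apply: (hk J); first by rewrite -ltnS -jJ.
have sw : size w == J.+1 by rewrite wj jJ.
by rewrite /heavy (bigD1 (Tuple sw)) /=; [left | rewrite -jJ].
Qed.

End Sampling.

Lemma le_limn_einf (R : realType) (u : (\bar R)^nat) (H : R) :
  (forall n, \forall j \near \oo, ((H - n.+1%:R^-1)%:E <= u j)%E) ->
  (H%:E <= limn_einf u)%E.
Proof.
move=> hu; have key n : ((H - n.+1%:R^-1)%:E <= limn_einf u)%E.
  rewrite limn_einf_lim; apply: lime_ge; first exact: is_cvg_einfs.
  have [N _ hN] := hu n; exists N => // k /= Nk.
  by apply: le_ereal_inf_tmp => _ [j /= kj <-]; apply: hN; exact: leq_trans kj.
apply/lee_subgt0Pr => e e0; set n := Num.truncn e^-1; apply: le_trans (key n).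
rewrite lee_fin lerB// -[e]invrK lef_pV2 ?posrE ?invr_gt0//.
exact/ltW/truncnS_gt.
Qed.

Lemma Mtilde_le (R : realType) d (mu : word d -> R) (p : word d -> bool) (w : word d) (b : R) :
  (forall u v : word d, size u = size w -> (0 < size v)%N -> p (u ++ v) -> mu (u ++ v) <= b) ->
  (Mtilde mu p w <= b%:E)%E.
Proof.
move=> h; apply: ge_ereal_sup => _ [u [hu _] <-].
by apply: ge_ereal_sup => _ [v [v0 pv] <-]; rewrite lee_fin h.
Qed.

Lemma le_log_ratio (R : realType) (M : \bar R) (j : nat) (h : R) :
  (0 < j)%N -> (M <= (2 `^ (- (j%:R * h)))%:E)%E -> (h%:E <= log_ratio M j)%E.
Proof.
move=> j0; case: M => [r| |] //= hr; last by rewrite leey.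
case: ifPn => r0; last by rewrite leey.
have ln2 : 0 < ln (2 : R) by rewrite ln_gt0// ltr1n.
rewrite lee_fin in hr; rewrite lee_fin /log2 ler_ndivlMr ?oppr_lt0 ?ltr0n//.
have : ln r <= - (j%:R * h) * ln 2 by rewrite -ln_powR ler_ln ?posrE ?powR_gt0.
by rewrite ler_pdivrMr// (_ : 1 *- j = - j%:R :> R)//; lra.
Qed.

Lemma eventually_le_pow2 (R : realType) (K h : R) : h < 0 ->
  \forall j \near \oo, K <= 2 `^ (- (j%:R * h)).
Proof.
move=> h0; have c0 : 0 < - h * ln 2 by rewrite mulr_gt0 ?oppr_gt0// ln_gt0// ltr1n.
have /cvgryPge/(_ (K / (- h * ln 2))) := @cvgr_idn R; apply: filterS => j.
rewrite ler_pdivrMr// pow2E => hj; apply: le_trans (expR_ge1Dx _).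
by rewrite mulNr -mulrN -mulrA; nra.
Qed.

Lemma ae_eventually_Mtilde_le (R : realType) (d : nat)
  (psi : seqspace d -> R) (nu : probability (Sigma d) R) (K alpha beta eta : R)
  (dO : measure_display) (Omega : measurableType dO) (P : probability Omega R)
  (p : word d -> Omega -> bool) :
  holder psi -> gibbs psi nu -> 0 < K -> 0 < alpha -> 0 <= beta ->
  (forall w, measurable [set om | p w om]) ->
  (forall w : word d, (0 < size w)%N ->
     P [set om | p w om] = (2 `^ (- (d%:R * (1 - eta) * (size w)%:R)))%:E) ->
  forall h, h < H_ell (gibbs_cap K alpha beta nu) eta ->
  \forall om \ae P, \forall j \near \oo, forall w : word d, size w = j ->
    (Mtilde (gibbs_cap K alpha beta nu) (fun w => p w om) w <= (2 `^ (- (j%:R * h)))%:E)%E.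
Proof.
move=> hpsi hnu K0 alpha0 beta0 pmeas pprob h hH; set mu := gibbs_cap K alpha beta nu.
have mu_le := gibbs_cap_le nu K0 alpha0 beta0.
have [h0|h0] := ltP h 0.
  apply: aeW => om; apply: filterS (eventually_le_pow2 K h0) => j hj w _.
  by apply: Mtilde_le => u v _ _ _; exact: le_trans (mu_le _) hj.
have mu_gt0 := gibbs_cap_gt0 hnu alpha beta K0.
have [q q0 hq] := lt_H_ell_moment h0 hH.
have [c c0 hc] := gibbs_cap_quasi_mult hnu hpsi beta K0 alpha0.
have [tau htau [C0 C00 hC0]] := partition_exponent [ffun _ => false] q0 c0 mu_gt0 mu_le hc.
have tauE : tau_mu mu q = tau by exact: cvg_lim htau.
rewrite tauE in hq.
apply: filterS (ae_eventually_sampled_le pmeas pprob q0 C00 mu_gt0 hC0 hq) => om.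
move=> [k _ hk]; exists k => // j /= kj w wj.
apply: Mtilde_le => u v uw v0 puv.
have kuv : (k <= size (u ++ v))%N by rewrite size_cat uw wj (leq_trans kj)// leq_addr.
apply: le_trans (hk _ kuv _ erefl puv) _; apply: ler_powR; first by rewrite ler1n.
by rewrite lerN2 ler_wpM2r// ler_nat size_cat uw wj leq_addr.
Qed.

Unset Implicit Arguments.

Theorem lemma4 (R : realType) (d : nat) (hd : (0 < d)%N)
  (psi : seqspace d -> R) (nu : probability (Sigma d) R) (K alpha beta : R)
  (hpsi : holder psi) (hnu : gibbs psi nu)
  (hK : 0 < K) (halpha : 0 < alpha) (hbeta : 0 <= beta)
  (hnonhom : ~ cohomologous_to_const psi)
  (eta : R) (heta : 0 < eta < 1)
  (dO : measure_display) (Omega : measurableType dO) (P : probability Omega R)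
  (p : word d -> Omega -> bool)
  (hmeas : forall w : word d, measurable [set om | p w om])
  (hind : mutually_independent_on P (fun w : word d => (0 < size w)%N)
            (fun w => [set om | p w om]))
  (hprob : forall w : word d, (0 < size w)%N ->
     P [set om | p w om] = (2 `^ (- (d%:R * (1 - eta) * (size w)%:R)))%:E) :
  let mu := gibbs_cap K alpha beta nu in
  exists E : set Omega, measurable E /\ P E = 1%E /\
    forall om, E om ->
    forall x : 'I_d -> R, (forall i, 0 <= x i <= 1) ->
      ((H_ell mu eta)%:E <=
        limn_einf (fun j : nat => log_ratio (Mtilde mu (fun w => p w om) (xprefix x j)) j))%E.
Proof.
move=> mu; set H := H_ell mu eta.
have : \forall om \ae P, forall n, \forall j \near \oo, forall w : word d, size w = j ->
    (Mtilde mu (fun w => p w om) w <= (2 `^ (- (j%:R * (H - n.+1%:R^-1))))%:E)%E.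
  apply: ae_foralln => n.
  have hlt : H - n.+1%:R^-1 < H by rewrite ltrBlDr ltrDl invr_gt0 ltr0n.
  exact: ae_eventually_Mtilde_le hpsi hnu hK halpha hbeta hmeas hprob _ hlt.
move=> /ae_full_measure[E [mE PE hE]]; exists E; split=> //; split=> // om Eom x _.
apply: le_limn_einf => n.
apply: filterS2 (hE om Eom n) (nbhs_infty_gt 0) => j hj j0.
exact: le_log_ratio j0 (hj _ (size_mkseq _ _)).
Qed.
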